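(* Let $G$ be a finite connected graph (multiple edges allowed, no loops) with vertices $v_1,\dots,v_n$, and let $i\neq j$. The pair $\{v_i,v_j\}$ has order $1$ if and only if there is a path $\mathcal{P}$ in $G$ from $v_i$ to $v_j$ (with pairwise distinct edges) such that for every edge $e$ of $\mathcal{P}$ the graph $G\setminus\{e\}$ is disconnected. Consequently, $G$ is multiply connected if and only if its Laplacian is spread.
   Context: For $i\neq j$ let $c_{ij}$ be the number of edges joining $v_i$ and $v_j$, and let $c_{ii}=-\sum_{j\neq i}c_{ij}$. Let $M(G)=(c_{ij})\in M_n(\mathbb{Z})$; the Laplacian of $G$ is $-M(G)$. Let $e_1,\dots,e_n$ be the standard basis of $\mathbb{Z}^n$ and $E_{ij}=e_i-e_j$. For an integer $h>0$, a pair $\{v_i,v_j\}$ ($i\ne j$) has order $h$ if there is $S=(s_1,\dots,s_n)^t\in\mathbb{Z}^n$ with $M(G)S=hE_{ij}$ and $\gcd(s_1-s_n,\dots,s_{n-1}-s_n)=1$; equivalently, the image of $E_{ij}$ in $\mathbb{Z}^n/\mathrm{Im}(M(G))$ has order exactly $h$. A graph is multiply connected if removing any single edge leaves it connected. A matrix $M\in M_n(\mathbb{Z})$ is spread if the quotient map $\mathbb{Z}^n\to\mathbb{Z}^n/\mathrm{Im}(M)$ (where $\mathrm{Im}(M)$ is the $\mathbb{Z}$-span of the columns) is injective on $\{e_1,\dots,e_n\}$, i.e. no $E_{ij}$ ($i\neq j$) lies in $\mathrm{Im}(M)$. *)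

From mathcomp Require Import all_boot all_order all_algebra.
Set Implicit Arguments. Unset Strict Implicit. Unset Printing Implicit Defensive.
Import GRing.Theory Num.Theory.

(* A finite multigraph without loops on the vertex set 'I_N is given by the
   edge multiplicities c : 'I_N -> 'I_N -> nat (c u v = number of edges joining
   u and v), symmetric with zero diagonal. The c u v edges joining u,v are
   labelled 0, ..., (c u v).-1. *)
Definition multigraph (N : nat) (c : 'I_N -> 'I_N -> nat) : Prop :=
  (forall u v, c u v = c v u) /\ (forall u, c u u = 0%N).

Definition adj (N : nat) (c : 'I_N -> 'I_N -> nat) : rel 'I_N :=
  fun u v => (0 < c u v)%N.

Definition connected (N : nat) (c : 'I_N -> 'I_N -> nat) : Prop :=
  forall u v, connect (adj c) u v.

(* G \ {e} where e is one of the edges joining x and y. *)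
Definition remove_edge (N : nat) (c : 'I_N -> 'I_N -> nat) (x y : 'I_N)
  : 'I_N -> 'I_N -> nat :=
  fun u v => if ((u == x) && (v == y)) || ((u == y) && (v == x))
             then (c u v).-1 else c u v.

Definition is_bridge (N : nat) (c : 'I_N -> 'I_N -> nat) (x y : 'I_N) : Prop :=
  ~ connected (remove_edge c x y).

Definition multiply_connected (N : nat) (c : 'I_N -> 'I_N -> nat) : Prop :=
  forall x y : 'I_N, (0 < c x y)%N -> connected (remove_edge c x y).

(* A walk starting at x is a sequence of steps (y, k): go to y along the edge
   labelled k joining the current vertex and y. *)
Fixpoint walk_ok (N : nat) (c : 'I_N -> 'I_N -> nat) (x : 'I_N)
  (p : seq ('I_N * nat)) : bool :=
  if p is (y, k) :: p' then (k < c x y)%N && walk_ok c y p' else true.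

(* canonical name of the edge labelled k between x and y (unordered pair) *)
Definition edge_key (N : nat) (x y : 'I_N) (k : nat) : 'I_N * 'I_N * nat :=
  if (x <= y)%N then (x, y, k) else (y, x, k).

Fixpoint walk_edges (N : nat) (x : 'I_N) (p : seq ('I_N * nat))
  : seq ('I_N * 'I_N * nat) :=
  if p is (y, k) :: p' then edge_key x y k :: walk_edges y p' else [::].

Fixpoint walk_all_bridges (N : nat) (c : 'I_N -> 'I_N -> nat) (x : 'I_N)
  (p : seq ('I_N * nat)) : Prop :=
  if p is (y, _) :: p' then is_bridge c x y /\ walk_all_bridges c y p' else True.

Local Open Scope ring_scope.

Definition Mgraph (N : nat) (c : 'I_N -> 'I_N -> nat) : 'M[int]_N :=
  \matrix_(i, j) if i == j then - (\sum_(k | k != i) (c i k)%:Z)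
                 else (c i j)%:Z.

Definition laplacian (N : nat) (c : 'I_N -> 'I_N -> nat) : 'M[int]_N :=
  - Mgraph c.

Definition Eij (N : nat) (i j : 'I_N) : 'cV[int]_N :=
  delta_mx i 0 - delta_mx j 0.

(* {v_i, v_j} has order h (vertices v_1..v_n are 'I_n.+1, v_n = ord_max) *)
Definition has_order (n : nat) (M : 'M[int]_n.+1) (h : nat) (i j : 'I_n.+1)
  : Prop :=
  exists S : 'cV[int]_n.+1,
    M *m S = h%:Z *: Eij i j /\
    \big[gcdz/0]_(k < n.+1 | k != ord_max) (S k 0 - S ord_max 0) = 1.

Definition spread (N : nat) (M : 'M[int]_N) : Prop :=
  forall i j : 'I_N, i != j -> ~ exists S : 'cV[int]_N, M *m S = Eij i j.

From mathcomp Require Import all_boot all_order all_algebra.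
From mathcomp Require Import zify.
Set Implicit Arguments.
Unset Strict Implicit.
Unset Printing Implicit Defensive.

Import Order.TTheory GRing.Theory Num.Theory.
Local Open Scope ring_scope.

(* An edge xy is a bridge iff it is the only edge leaving some vertex set P
   containing x but not y; the indicator of the complement of P is then an
   integer vector S with M S = E_xy, and summing along a path of bridges gives
   E_ij.  Conversely, let M S = E_ij with i <> j.  For every sublevel set
   P = {u | S u <= S x} the net flow sum_{u in P, v notin P} c_uv (S v - S u)
   equals [i in P] - [j in P] <= 1, while every edge leaving P contributes a
   positive integer.  So an edge x -> w with S x < S w is the only edge leaving
   P, i.e. a bridge, and S w = S x + 1; climbing such edges from i builds a path
   of bridges reaching j, along which S strictly increases.  The gcd of the
   differences S k - S b divides every coordinate of M S, among them the
   coordinate 1 at i. *)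

Lemma dvdz_big_gcdz (I : eqType) (r : seq I) (P : pred I) (F : I -> int) k :
  k \in r -> P k -> (\big[gcdz/0]_(i <- r | P i) F i %| F k)%Z.
Proof.
elim: r => [//|a r IHr]; rewrite inE big_cons => /orP[/eqP-> Pa|kr Pk].
  by rewrite Pa dvdz_gcdl.
case: (P a); last exact: IHr.
exact: dvdz_trans (dvdz_gcdr _ _) (IHr kr Pk).
Qed.

Lemma sumr_ge0_le1 (I : finType) (P : pred I) (F : I -> int) a :
  (forall t, P t -> 0 <= F t) -> P a -> 0 < F a -> \sum_(t | P t) F t <= 1 ->
  [/\ \sum_(t | P t) F t = 1, F a = 1 & forall t, P t -> t != a -> F t = 0].
Proof.
move=> F_ge0 Pa Fa_gt0; rewrite (bigD1 a) //=; set rest := \sum_(t | _) _.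
have rest_ge0 : 0 <= rest by apply: sumr_ge0 => t /andP[Pt _]; apply: F_ge0.
move=> sum_le1; have Fa1 : F a = 1 by lia.
have rest0 : rest = 0 by lia.
split=> [|//|t Pt ta]; first by rewrite Fa1 rest0 addr0.
by apply: (psumr_eq0P _ rest0); [move=> u /andP[Pu _]; apply: F_ge0 | rewrite Pt ta].
Qed.

Lemma laplacian_mulmx N (c : 'I_N -> 'I_N -> nat) (S : 'cV[int]_N) :
  laplacian c *m S = Mgraph c *m - S.
Proof. by rewrite mulNmx mulmxN. Qed.

Section Multigraph.

Variables (N : nat) (c : 'I_N -> 'I_N -> nat).
Hypothesis c_sym : forall u v, c u v = c v u.
Hypothesis c_diag0 : forall u, c u u = 0%N.

Lemma Mgraph_mulmxE (S : 'cV[int]_N) u :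
  (Mgraph c *m S) u 0 = \sum_v (c u v)%:Z * (S v 0 - S u 0).
Proof.
rewrite mxE (bigD1 u) //= [RHS](bigD1 u) //= c_diag0 mul0r add0r !mxE eqxx.
under eq_bigr => v vu do rewrite mxE eq_sym (negbTE vu).
under [RHS]eq_bigr => v _ do rewrite mulrBr.
by rewrite sumrB -mulr_suml mulNr addrC.
Qed.

Lemma EijE (x y u : 'I_N) : Eij x y u 0 = (u == x)%:R - (u == y)%:R.
Proof. by rewrite !mxE /= !andbT. Qed.

Lemma remove_edge_sym x y u v : remove_edge c x y u v = remove_edge c x y v u.
Proof.
rewrite /remove_edge c_sym; congr (if _ then _ else _).
by rewrite orbC (andbC (u == y)) (andbC (u == x)).
Qed.

Lemma remove_edge_other x y u v :
  ~~ (((u == x) && (v == y)) || ((u == y) && (v == x))) ->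
  remove_edge c x y u v = c u v.
Proof. by rewrite /remove_edge => /negbTE ->. Qed.

Lemma remove_edge_connect_sym x y : connect_sym (adj (remove_edge c x y)).
Proof. by apply: sym_connect_sym => u v; rewrite /adj remove_edge_sym. Qed.

Lemma connectedP : reflect (connected c) [forall u, forall v, connect (adj c) u v].
Proof.
by apply: (iffP forallP) => [conn u v | conn u]; [move/forallP: (conn u) | apply/forallP].
Qed.

Definition edge_cut (P : pred 'I_N) (x y : 'I_N) :=
  [/\ P x, ~~ P y & forall u v, P u -> ~~ P v -> c u v = ((u == x) && (v == y))].

Lemma edge_cut_bridge P x y : edge_cut P x y -> is_bridge c x y.
Proof.
move=> [Px nPy cross] conn.
have P_closed u v : adj (remove_edge c x y) u v -> u \in P -> v \in P.
  move=> + Pu; apply: contraTT => nPv; rewrite /adj -leqNgt leqn0.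
  have [/andP[/eqP-> /eqP->]|not_xy] := boolP ((u == x) && (v == y)).
    by rewrite /remove_edge !eqxx /= cross // !eqxx.
  rewrite remove_edge_other; first by rewrite cross // (negbTE not_xy).
  by rewrite negb_or not_xy /=; apply: contraNN nPy => /andP[/eqP<- _].
have := closed_connect (intro_closed (remove_edge_connect_sym x y) P_closed) (conn x y).
by rewrite !unfold_in Px (negbTE nPy).
Qed.

Lemma edge_cut_mult1 P x y : edge_cut P x y -> c x y = 1%N.
Proof. by case=> Px nPy /(_ x y Px nPy); rewrite !eqxx. Qed.

Lemma bridge_edge_cut x y : connected c -> is_bridge c x y -> (0 < c x y)%N ->
  edge_cut (connect (adj (remove_edge c x y)) x) x y.
Proof.
move=> conn bridge cxy; set A := connect _ x.
have nAy : ~~ A y.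
  apply/negP => Axy; apply: bridge => u v; apply: connect_sub (conn u v) => a b ab.
  have [/orP[]/andP[/eqP-> /eqP->] //|not_xy] :=
    boolP (((a == x) && (b == y)) || ((a == y) && (b == x))).
    by rewrite remove_edge_connect_sym.
  by apply: connect1; rewrite /adj remove_edge_other.
have A_closed u v : A u -> (0 < remove_edge c x y u v)%N -> A v.
  by move=> Au uv; apply: connect_trans Au (connect1 uv).
split=> [|//|u v Au nAv]; first exact: connect0.
have [/andP[/eqP-> /eqP->]|not_xy] /= := boolP ((u == x) && (v == y)).
  have := A_closed x y (connect0 _ x); rewrite (negbTE nAy) /remove_edge !eqxx /=.
  by move: cxy; clear; lia.
have := A_closed u v Au; rewrite (negbTE nAv) remove_edge_other; first by lia.
by rewrite negb_or not_xy; apply: contraNN nAy => /andP[/eqP<- _].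
Qed.

Lemma edge_cut_Eij P x y :
  edge_cut P x y -> Mgraph c *m \col_v (~~ P v)%:R = Eij x y.
Proof.
move=> [Px nPy cross]; apply/matrixP => u v; rewrite (ord1 v) Mgraph_mulmxE EijE.
under eq_bigr => k _ do rewrite !mxE.
have [Pu|nPu] := boolP (P u).
- have uy : (u == y) = false by apply: contraTF Pu => /eqP->.
  rewrite uy subr0 (bigD1 y) //= big1 => [|k ky].
    by rewrite (negbTE nPy) cross // eqxx andbT; case: (u == x).
  have [Pk|nPk] := boolP (P k); first by rewrite subrr mulr0.
  by rewrite cross // (negbTE ky) andbF mul0r.
- have ux : (u == x) = false by apply: contraNF nPu => /eqP->.
  rewrite ux sub0r (bigD1 x) //= big1 => [|k kx].
    rewrite Px c_sym cross // eqxx /=.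
    by case: (u == y); rewrite ?mul1r ?mul0r ?oppr0 addr0.
  have [Pk|nPk] := boolP (P k); last by rewrite subrr mulr0.
  by rewrite c_sym cross // (negbTE kx) mul0r.
Qed.

Lemma bridge_Eij x y : connected c -> is_bridge c x y -> (0 < c x y)%N ->
  exists S, Mgraph c *m S = Eij x y.
Proof. by move=> conn bridge cxy; eexists; apply/edge_cut_Eij/bridge_edge_cut. Qed.

Lemma bridge_walk_Eij x p : connected c -> walk_ok c x p -> walk_all_bridges c x p ->
  exists S, Mgraph c *m S = Eij x (last x (map fst p)).
Proof.
move=> conn; elim: p x => [|[y k] p IHp] x /=.
  by exists 0; rewrite mulmx0 /Eij subrr.
move=> /andP[ky walk_p] [bridge bridges_p].
have [S1 HS1] := bridge_Eij conn bridge (leq_ltn_trans (leq0n k) ky).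
have [S2 HS2] := IHp y walk_p bridges_p.
by exists (S1 + S2); rewrite mulmxDr HS1 HS2 /Eij addrA subrK.
Qed.

Section Potential.

Variables (S : 'cV[int]_N) (i j : 'I_N).
Hypothesis HS : Mgraph c *m S = Eij i j.
Let s u : int := S u 0.

Lemma potential_balance u :
  \sum_v (c u v)%:Z * (s v - s u) = (u == i)%:R - (u == j)%:R.
Proof. by rewrite /s -Mgraph_mulmxE HS EijE. Qed.

Lemma cut_flow (P : pred 'I_N) :
  \sum_(u | P u) \sum_(v | ~~ P v) (c u v)%:Z * (s v - s u) = (P i)%:R - (P j)%:R.
Proof.
pose f u v := (c u v)%:Z * (s v - s u).
have inner0 : \sum_(u | P u) \sum_(v | P v) f u v = 0.
  set X := LHS; suff : X = - X by lia.
  rewrite {1}/X exchange_big /= -sumrN; apply: eq_bigr => v _.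
  by rewrite -sumrN; apply: eq_bigr => u _; rewrite /f c_sym -mulrN opprB.
transitivity (\sum_(u | P u) \sum_v f u v).
  by under [RHS]eq_bigr => u _ do rewrite (bigID P) /=; rewrite big_split /= inner0 add0r.
rewrite (eq_bigr _ (fun u _ => potential_balance u)) sumrB.
have sum_indicator a : \sum_(u | P u) ((u == a)%:R : int) = (P a)%:R.
  rewrite big_mkcond (bigD1 a) //= eqxx big1 => [|u ua]; first by rewrite addr0; case: (P a).
  by rewrite (negbTE ua); case: (P u).
by rewrite !sum_indicator.
Qed.

Lemma sublevel_edge_cut x w : (0 < c x w)%N -> s x < s w ->
  [/\ edge_cut [pred u | s u <= s x] x w, s w = s x + 1, s i <= s x & s x < s j].
Proof.
move=> cxw sxw; set P := [pred u | s u <= s x].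
pose Q (t : 'I_N * 'I_N) := P t.1 && ~~ P t.2.
pose F (t : 'I_N * 'I_N) := (c t.1 t.2)%:Z * (s t.2 - s t.1).
have flow : \sum_(t | Q t) F t = (P i)%:R - (P j)%:R by rewrite -cut_flow pair_big_dep.
have gap t : Q t -> 0 < s t.2 - s t.1.
  by case/andP; rewrite /= -ltNge subr_gt0; apply: le_lt_trans.
have F_ge0 t : Q t -> 0 <= F t by move/gap/ltW; apply: mulr_ge0.
have Qxw : Q (x, w) by rewrite /Q /= lexx -ltNge.
have Fxw_gt0 : 0 < F (x, w) by apply: mulr_gt0; [rewrite ltz_nat | apply: gap].
have [|flow1 Fxw1 F0] := sumr_ge0_le1 F_ge0 Qxw Fxw_gt0.
  by rewrite flow; case: (P i); case: (P j).
have [cxw1 sw] : c x w = 1%N /\ s w = s x + 1.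
  by move: Fxw1 (gap _ Qxw); rewrite /F /=; nia.
have /andP[Pi nPj] : P i && ~~ P j by move: flow; rewrite flow1; case: (P i); case: (P j).
have cut : edge_cut P x w.
  split=> [|/=|u v Pu nPv]; [exact: lexx | by rewrite -ltNge |].
  have [/andP[/eqP-> /eqP->] //|not_xw] := boolP ((u == x) && (v == w)).
  have Quv : Q (u, v) by rewrite /Q Pu.
  have := F0 _ Quv; rewrite xpair_eqE => /(_ not_xw).
  by move: (gap _ Quv); rewrite /F /=; nia.
by split=> //; rewrite /= -ltNge in nPj.
Qed.

Lemma up_neighbour u (Q : pred 'I_N) :
  0 < \sum_(v | Q v) (c u v)%:Z * (s v - s u) -> exists v, (0 < c u v)%N && (s u < s v).
Proof.
move=> sum_gt0; apply/existsP; apply: contraTT sum_gt0 => /existsPn no_up.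
rewrite -leNgt; apply: sumr_le0 => v _.
have [cuv0|cuv_gt0] := posnP (c u v); first by rewrite cuv0 mul0r.
by apply: mulr_ge0_le0; rewrite // subr_le0 leNgt; move: (no_up v); rewrite cuv_gt0.
Qed.

Lemma up_neighbour_source : i != j -> exists v, (0 < c i v)%N && (s i < s v).
Proof.
move=> ij; apply: (@up_neighbour i predT).
by rewrite potential_balance eqxx (negbTE ij) subr0 ltr01.
Qed.

Lemma up_neighbour_step x w : (0 < c x w)%N -> s x < s w -> w != j ->
  exists v, (0 < c w v)%N && (s w < s v).
Proof.
move=> cxw sxw wj; have [cut sw si _] := sublevel_edge_cut cxw sxw.
have wi : w != i by apply/eqP => wi; move: si sxw; rewrite wi; lia.
have := potential_balance w; rewrite (negbTE wi) (negbTE wj) subrr (bigD1 x) //=.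
rewrite c_sym (edge_cut_mult1 cut); set rest := \sum_(v | _) _ => balance.
have rest_gt0 : 0 < rest by lia.
exact: up_neighbour rest_gt0.
Qed.

(* The invariant that keeps the edges of an ascending walk distinct. *)
Let above (t : int) (e : 'I_N * 'I_N * nat) := (t <= s e.1.1) && (t <= s e.1.2).

Lemma ascending_bridge_walk m x : s j <= s x + m%:Z ->
  x = j \/ (exists w, (0 < c x w)%N && (s x < s w)) ->
  exists p, [/\ walk_ok c x p, last x (map fst p) = j, uniq (walk_edges x p),
                walk_all_bridges c x p & all (above (s x)) (walk_edges x p)].
Proof.
elim: m x => [|m IHm] x bound [->|[w /andP[cxw sxw]]]; try by exists [::].
all: have [cut sw _ sxj] := sublevel_edge_cut cxw sxw.
  by exfalso; lia.
have w_next : w = j \/ exists v, (0 < c w v)%N && (s w < s v).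
  by have [|wj] := eqVneq w j; [left | right; apply: up_neighbour_step cxw sxw wj].
have [|p [walk_p last_p uniq_p bridges_p above_p]] := IHm w _ w_next.
  by move: bound; rewrite sw; lia.
exists ((w, 0%N) :: p); split=> /=; rewrite ?cxw ?walk_p //.
- rewrite uniq_p andbT; apply/negP => /(allP above_p).
  by rewrite /above /edge_key; case: ifP => _ /=; lia.
- by split; first exact: edge_cut_bridge cut.
- apply/andP; split; first by rewrite /above /edge_key; case: ifP => _ /=; lia.
  by apply: sub_all above_p => e /andP[e1 e2]; apply/andP; split; lia.
Qed.

Lemma potential_gcd_differences (b : 'I_N) :
  i != j -> \big[gcdz/0]_(k | k != b) (s k - s b) = 1.
Proof.
move=> ij; set d := \big[gcdz/0]_(k | _) _.
have d_ge0 : 0 <= d by rewrite /d; elim/big_rec: _.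
have d_dvd k : (d %| s k - s b)%Z.
  have [->|kb] := eqVneq k b; first by rewrite subrr dvdz0.
  by apply: dvdz_big_gcdz; rewrite ?mem_index_enum.
have : (d %| (Mgraph c *m S) i 0%R)%Z.
  rewrite Mgraph_mulmxE; apply: rpred_sum => k _; apply: dvdz_mull.
  have -> : S k 0 - S i 0 = (s k - s b) - (s i - s b) by rewrite opprB addrA subrK.
  exact: rpredB (d_dvd k) (d_dvd i).
by rewrite HS EijE eqxx (negbTE ij) subr0 dvdz1 => /eqP; lia.
Qed.

End Potential.
End Multigraph.

Theorem corollary2p3 (n : nat) (c : 'I_n.+1 -> 'I_n.+1 -> nat) :
  multigraph c -> connected c ->
  (forall i j : 'I_n.+1, i != j ->
     (has_order (Mgraph c) 1 i j <->
      exists p : seq ('I_n.+1 * nat),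
        [/\ walk_ok c i p, last i (map fst p) = j,
            uniq (walk_edges i p) & walk_all_bridges c i p]))
  /\ (multiply_connected c <-> spread (laplacian c)).
Proof.
move=> [c_sym c_diag0] conn.
split=> [i j ij|]; first split.
- rewrite /has_order scale1r => -[S [HS _]].
  have up_i := up_neighbour_source c_diag0 HS ij.
  have [|p [? ? ? ? _]] := ascending_bridge_walk c_sym c_diag0 HS
                             (m := absz (S j 0%R - S i 0%R)) _ (or_intror up_i).
    by rewrite -lerBlDl abszE ler_norm.
  by exists p.
- move=> [p [walk_p last_p _ bridges_p]].
  have [S HS] := bridge_walk_Eij c_sym c_diag0 conn walk_p bridges_p.
  rewrite last_p in HS; exists S; rewrite scale1r; split=> //.
  exact (potential_gcd_differences c_diag0 HS ord_max ij).
split=> [mult_conn i j ij [S] | spread_L x y cxy].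
- rewrite laplacian_mulmx => HS.
  have [w /andP[ciw siw]] := up_neighbour_source c_diag0 HS ij.
  have [cut _ _ _] := sublevel_edge_cut c_sym c_diag0 HS ciw siw.
  by apply: (edge_cut_bridge c_sym cut); apply: mult_conn.
- apply/connectedP/contraT => /connectedP disconn.
  have [S HS] := bridge_Eij c_sym c_diag0 conn disconn cxy.
  have xy : x != y by apply: contraTneq cxy => ->; rewrite c_diag0.
  by case: (spread_L x y xy); exists (- S); rewrite laplacian_mulmx opprK.
Qed.
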